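(* Consider a regulator with opening degree $o\in[0,1]$ ($o=1$: fully open, ''open mode''; $o=0$: fully closed, ''closed mode''), whose operation point is given by continuous functions $o\mapsto (p_\ell(o),p_r(o),q(o))\in\mathbb{R}^3$ such that $p_\ell$ is nonincreasing in $o$, $p_r$ is nondecreasing in $o$, and $q$ is nondecreasing in $o$. Let the six target values $\underline{p}_\ell,\overline{p}_\ell,\underline{p}_r,\overline{p}_r,\underline{q},\overline{q}\in[0,\infty]$ be given (with priorities, directions and violation rules as in the context), and assume that $\underline{q}$ is violated at every opening degree (e.g. $\underline{q}=\infty$). Let $o^*\in[0,1]$ be the current opening degree and let $\rho$ be a pushing target value at $o^*$, with direction $d(\rho)$. Assume the regulator is perfectly adjusted at $o^*$ in the following sense: either ($d(\rho)$ = opening and $o^*=1$), or ($d(\rho)$ = closing and $o^*=0$), or for every $o'\neq o^*$ lying in the direction $d(\rho)$ from $o^*$ (i.e. $o'\in(o^*,1]$ if $d(\rho)$ = opening, $o'\in[0,o^* )$ if $d(\rho)$ = closing) there is a target value $\tau$ with $\pi(\tau)>\pi(\rho)$ that is violated at the operation point $(p_\ell(o'),p_r(o'),q(o'))$. Then at least one of the following holds: 1) there exists a target value $\tau$ (a ''stable'' target value) with $\pi(\tau)>\pi(\rho)$ and $d(\tau)\neq d(\rho)$ whose value equals its associated quantity at $o^*$ (e.g. $\underline{p}_\ell=p_\ell(o^* )$ if $\tau=\underline{p}_\ell$); 2) the regulator is fully open ($o^*=1$) and $\rho$ is an opening target value; 3) the regulator is fully closed ($o^*=0$) and $\rho$ is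 a closing target value.
   Context: Target values, their associated quantity, bound type, priority $\pi$ and direction $d$ (the direction in which the regulator changes its opening degree when the target value is violated): - $\underline{p}_\ell$ (minimal left pressure): lower bound $\underline{p}_\ell\le p_\ell$, $\pi=4$, closing; - $\overline{p}_r$ (maximal right pressure): upper bound $\overline{p}_r\ge p_r$, $\pi=4$, closing; - $\overline{p}_\ell$ (maximal left pressure): upper bound $\overline{p}_\ell\ge p_\ell$, $\pi=3$, opening; - $\underline{p}_r$ (minimal right pressure): lower bound $\underline{p}_r\le p_r$, $\pi=3$, opening; - $\overline{q}$ (maximal flow): upper bound $\overline{q}\ge q$, $\pi=2$, closing; - $\underline{q}$ (minimal flow): lower bound $\underline{q}\le q$, $\pi=1$, opening. A target value is satisfied at an operation point $(p_\ell,p_r,q)$ if its imposed bound holds and violated otherwise (a lower bound $\tau\le x$ is violated iff $x<\tau$; an upper bound $\tau\ge x$ is violated iff $x>\tau$). Closing means decreasing $o$, opening means increasing $o$. A pushing target value at $o^*$ is a target value that is violated at $(p_\ell(o^* ),p_r(o^* ),q(o^* ))$ and has maximal priority $\pi$ among all violated target values there (all violated target values of maximal priority have the same direction, since equal priorities only occur for equal directions). The setting models the ''perfect control'' assumption: the regulator reacts immediately and with perfect precision to target values according to the priorities, so the opening degree cannot be changed in the pushing direction without violating a higher-priority target value. The regulator is assumed not to be closed by its built-in check valve. *)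

From HB Require Import structures.
From mathcomp Require Import all_boot all_order all_algebra.
From mathcomp Require Import all_classical all_reals all_analysis.
Set Implicit Arguments. Unset Strict Implicit. Unset Printing Implicit Defensive.
Import Order.TTheory GRing.Theory Num.Theory.
Local Open Scope ring_scope.

Inductive target := pl_min | pr_max | pl_max | pr_min | q_max | q_min.

(* Direction in which the regulator moves when the target value is violated. *)
Inductive direction := Opening | Closing.

Definition priority (t : target) : nat :=
  match t with
  | pl_min => 4 | pr_max => 4 | pl_max => 3 | pr_min => 3 | q_max => 2 | q_min => 1
  end.

Definition dir (t : target) : direction :=
  match t with
  | pl_min => Closing | pr_max => Closing | pl_max => Opening
  | pr_min => Opening | q_max => Closing | q_min => Opening
  end.

Definition is_lower (t : target) : bool :=
  match t with
  | pl_min | pr_min | q_min => true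
  | _ => false
  end.

Section Op.
Variable R : realType.

Definition quantity (t : target) (op : R * R * R) : R :=
  let '(pl, pr, q) := op in
  match t with
  | pl_min | pl_max => pl
  | pr_min | pr_max => pr
  | q_min | q_max => q
  end.

Definition violated (tv : target -> \bar R) (op : R * R * R) (t : target) : Prop :=
  if is_lower t then ((quantity t op)%:E < tv t)%E
  else (tv t < (quantity t op)%:E)%E.

Definition pushing (tv : target -> \bar R) (op : R * R * R) (rho : target) : Prop :=
  violated tv op rho /\
  forall t, violated tv op t -> (priority t <= priority rho)%N.

End Op.

(* If no higher-priority target value of the opposite direction is tight at
   the current opening degree, then every higher-priority target value is
   satisfied on a one-sided neighbourhood of it in the pushing direction:
   those of the pushing direction by monotonicity (moving that way only helps
   them, and they are satisfied at the current point because rho is pushing),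
   those of the opposite direction by continuity (they hold strictly).  Perfect
   adjustment then leaves no room to move, so the regulator sits at the end of
   [0, 1] towards which rho pushes. *)
From HB Require Import structures.
From mathcomp Require Import all_boot all_order all_algebra.
From mathcomp Require Import all_classical all_reals all_analysis.
From mathcomp Require Import lra.
Import Order.TTheory GRing.Theory Num.Theory.
Import numFieldNormedType.Exports.
Local Open Scope classical_set_scope.
Local Open Scope ring_scope.

Definition beyond {R : numDomainType} (d : direction) (x y : R) : bool :=
  if d is Opening then x < y else y < x.

Lemma exists_beyond_within {R : realType} {d} {a b x : R} {P : set R} :
  a <= x <= b -> (if d is Opening then x < b else a < x) ->
  (\forall y \near within `[a, b] (nbhs x), P y) ->
  exists y, [/\ a <= y <= b, beyond d x y & P y].
Proof.
move=> /andP[ax xb] inner; rewrite near_withinE => nP.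
case: d inner => inner.
- apply: (@filter_ex _ x^'+); near=> y.
  have xy : x < y by near: y; exact: nbhs_right_gt.
  have yb : y < b by near: y; exact: nbhs_right_lt.
  have yab : a <= y <= b by apply/andP; split; lra.
  split=> //; move: yab; near: y; apply: cvg_within.
  by apply: filterS nP => y Py yab; apply: Py; rewrite /= in_itv.
- apply: (@filter_ex _ x^'-); near=> y.
  have yx : y < x by near: y; exact: nbhs_left_lt.
  have ay : a < y by near: y; exact: nbhs_left_gt.
  have yab : a <= y <= b by apply/andP; split; lra.
  split=> //; move: yab; near: y; apply: cvg_within.
  by apply: filterS nP => y Py yab; apply: Py; rewrite /= in_itv.
Unshelve. all: by end_near.
Qed.

Lemma lte_fin_nbhsr {R : realFieldType} (t : \bar R) (x : R) :
  (t < x%:E)%E -> \forall y \near x, (t < y%:E)%E.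
Proof.
case: t => [r||] //=; last by move=> _; near=> y; exact: ltNyr.
by rewrite lte_fin => /lt_nbhsr; apply: filterS => y; rewrite lte_fin.
Unshelve. all: by end_near.
Qed.

Lemma lte_fin_nbhsl {R : realFieldType} (t : \bar R) (x : R) :
  (x%:E < t)%E -> \forall y \near x, (y%:E < t)%E.
Proof.
case: t => [r||] //=; last by move=> _; near=> y; exact: ltry.
by rewrite lte_fin => /lt_nbhsl; apply: filterS => y; rewrite lte_fin.
Unshelve. all: by end_near.
Qed.

Lemma near_forall_target {T : Type} (F : set_system T) (P : target -> T -> Prop) :
  Filter F -> (forall t, \forall x \near F, P t x) ->
  \forall x \near F, forall t, P t x.
Proof.
move=> FF nP; near=> x => t.
by case: t; near: x; exact: nP.
Unshelve. all: by end_near.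
Qed.

Section StrictSatisfaction.
Context {R : realType} (tv : target -> \bar R).

Definition strictly_satisfied (op : R * R * R) (t : target) : Prop :=
  if is_lower t then (tv t < (quantity t op)%:E)%E
  else ((quantity t op)%:E < tv t)%E.

Lemma strictly_satisfied_not_violated {op t} :
  strictly_satisfied op t -> ~ violated tv op t.
Proof.
rewrite /strictly_satisfied /violated.
by case: is_lower => lt1 /(lt_trans lt1); rewrite ltxx.
Qed.

Lemma not_violated_strictly_satisfied {op t} :
  ~ violated tv op t -> tv t <> (quantity t op)%:E -> strictly_satisfied op t.
Proof.
rewrite /strictly_satisfied /violated => nv /eqP neq.
case: is_lower nv => /negP; rewrite -leNgt le_eqVlt ?(negPf neq) //.
by rewrite eq_sym (negPf neq).
Qed.

Lemma strictly_satisfied_near {T : Type} {F : set_system T} {FF : Filter F}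
    {g : T -> R * R * R} {op t} :
  (fun x => quantity t (g x)) @ F --> quantity t op ->
  strictly_satisfied op t -> \forall x \near F, strictly_satisfied (g x) t.
Proof.
rewrite /strictly_satisfied => cvg_qt; case: is_lower.
- by move/lte_fin_nbhsr; exact: cvg_qt.
- by move/lte_fin_nbhsl; exact: cvg_qt.
Qed.

End StrictSatisfaction.

Section Regulator.
Context {R : realType} {pl pr q : R -> R} {tv : target -> \bar R}.
Local Notation op o := (pl o, pr o, q o).

Hypothesis mono_pl : {in `[0, 1] &, forall x y, x <= y -> pl y <= pl x}.
Hypothesis mono_pr : {in `[0, 1] &, forall x y, x <= y -> pr x <= pr y}.
Hypothesis mono_q : {in `[0, 1] &, forall x y, x <= y -> q x <= q y}.

Lemma violated_beyond {t} {o o' : R} :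
  o \in `[0, 1] -> o' \in `[0, 1] -> beyond (dir t) o o' ->
  violated tv (op o') t -> violated tv (op o) t.
Proof.
move=> o01 o'01; rewrite /violated /beyond.
case: t => /= /ltW le_oo';
 [ have := mono_pl _ _ o'01 o01 le_oo' | have := mono_pr _ _ o'01 o01 le_oo'
 | have := mono_pl _ _ o01 o'01 le_oo' | have := mono_pr _ _ o01 o'01 le_oo'
 | have := mono_q _ _ o'01 o01 le_oo' | have := mono_q _ _ o01 o'01 le_oo' ];
 rewrite -lee_fin => le_quantity.
- exact: le_lt_trans.
- by move/lt_le_trans; apply.
- by move/lt_le_trans; apply.
- exact: le_lt_trans.
- by move/lt_le_trans; apply.
- exact: le_lt_trans.
Qed.

Hypothesis cont_pl : {within `[0, 1]%classic, continuous pl}.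
Hypothesis cont_pr : {within `[0, 1]%classic, continuous pr}.
Hypothesis cont_q : {within `[0, 1]%classic, continuous q}.

Lemma higher_priority_satisfied_near {ostar : R} {rho : target} :
  0 <= ostar <= 1 -> pushing tv (op ostar) rho ->
  (forall tau, (priority rho < priority tau)%N -> dir tau <> dir rho ->
     tv tau <> (quantity tau (op ostar))%:E) ->
  \forall o \near within `[0, 1] (nbhs ostar), forall tau,
    (priority rho < priority tau)%N -> beyond (dir rho) ostar o ->
    ~ violated tv (op o) tau.
Proof.
move=> ostar01 [_ rho_max] not_tight.
have ostar_in : ostar \in `[0, 1] by rewrite in_itv.
apply: near_forall_target => tau.
have [hp|hp] := ltnP (priority rho) (priority tau); last first.
  by apply: nearW.
have nv : ~ violated tv (op ostar) tau.
  by move=> /rho_max; rewrite leqNgt hp.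
have [same_dir|opp_dir] := pselect (dir tau = dir rho).
  rewrite near_withinE; near=> o => o01 _; rewrite -same_dir => beyond_o.
  by move/(violated_beyond ostar_in o01 beyond_o).
have cvg_quantity : (fun o => quantity tau (op o)) @ within `[0, 1] (nbhs ostar)
    --> quantity tau (op ostar).
  by case: tau {hp nv opp_dir};
     apply/(subspace_continuousP _ _).1 => //; rewrite /= in_itv.
apply: filterS (strictly_satisfied_near tv cvg_quantity
  (not_violated_strictly_satisfied tv nv (not_tight _ hp opp_dir))) => o sat_o _ _.
exact: strictly_satisfied_not_violated sat_o.
Unshelve. all: by end_near.
Qed.

End Regulator.

Theorem theorem1 (R : realType) (pl pr q : R -> R) (tv : target -> \bar R)
  (ostar : R) (rho : target)
  (cont_pl : {within `[0, 1]%classic, continuous pl})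
  (cont_pr : {within `[0, 1]%classic, continuous pr})
  (cont_q : {within `[0, 1]%classic, continuous q})
  (mono_pl : {in `[0, 1] &, forall x y, x <= y -> pl y <= pl x})
  (mono_pr : {in `[0, 1] &, forall x y, x <= y -> pr x <= pr y})
  (mono_q : {in `[0, 1] &, forall x y, x <= y -> q x <= q y})
  (tv_nonneg : forall t, (0 <= tv t)%E)
  (qmin_viol : forall o, 0 <= o <= 1 -> violated tv (pl o, pr o, q o) q_min)
  (ostar01 : 0 <= ostar <= 1)
  (rho_push : pushing tv (pl ostar, pr ostar, q ostar) rho)
  (adjusted :
     (dir rho = Opening /\ ostar = 1) \/
     (dir rho = Closing /\ ostar = 0) \/
     (forall o', 0 <= o' <= 1 ->
        (if dir rho is Opening then ostar < o' else o' < ostar) ->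
        exists tau, (priority rho < priority tau)%N /\
                    violated tv (pl o', pr o', q o') tau)) :
  (exists tau, (priority rho < priority tau)%N /\ dir tau <> dir rho /\
               tv tau = (quantity tau (pl ostar, pr ostar, q ostar))%:E) \/
  (ostar = 1 /\ dir rho = Opening) \/
  (ostar = 0 /\ dir rho = Closing).
Proof.
have [stable|not_stable] := pselect (exists tau,
  (priority rho < priority tau)%N /\ dir tau <> dir rho /\
  tv tau = (quantity tau (pl ostar, pr ostar, q ostar))%:E); first by left.
right.
case: adjusted => [[-> ->]|[[-> ->]|blocked]]; [by left | by right |].
have satisfied_near := higher_priority_satisfied_near mono_pl mono_pr mono_q
  cont_pl cont_pr cont_q ostar01 rho_push
  (fun tau hp hd tight => not_stable (ex_intro _ tau (conj hp (conj hd tight)))).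
have no_room : ~~ (if dir rho is Opening then ostar < 1 else 0 < ostar).
  apply/negP => inner.
  have [y [y01 beyond_y sat_y]] :=
    exists_beyond_within ostar01 inner satisfied_near.
  have [tau [hp viol]] := blocked y y01 beyond_y.
  exact: sat_y tau hp beyond_y viol.
move: ostar01 => /andP[ostar_ge0 ostar_le1].
case: (dir rho) no_room; rewrite -leNgt => ostar_end;
  [left | right]; split=> //; lra.
Qed.
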